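(* In the algebra $\mathcal Y_d$ the following hold for all $r,s\ge0$: $[a_r,a_s]=0$; $[a_1,b_s]=b_s$; $[a_{r+1},b_s]-[a_r,b_{s+1}]=b_{r+s}-\sum_{t=0}^{r-1}b_{r+s-t-1}a_t$; $[b_{r+1},b_s]-[b_r,b_{s+1}]=b_rb_s+b_sb_r$.
   Context: Let $V=\mathbb C^d$ and $\mathfrak a=(\mathfrak{gl}(V)\ltimes V)\oplus(\mathfrak{gl}(V)\ltimes V^* )$ with basis $e_{ij}$, $e'_{ij}$ (standard matrix units of the two copies of $\mathfrak{gl}(V)$), $q_i$ (basis of $V$), $p_i$ (basis of $V^*$), brackets: standard $\mathfrak{gl}$ brackets among the $e$'s and among the $e'$'s, $[e_{ij},q_k]=\delta_{jk}q_i$, $[e'_{ij},p_k]=-\delta_{ki}p_j$, all other brackets of basis elements zero. Let $\mathfrak{gl}(V)_{\rm diag}$ be spanned by $e_{ij}+e'_{ij}$ and $\mathcal Y_d:=\big(U(\mathfrak a)/U(\mathfrak a)\mathfrak{gl}(V)_{\rm diag}\big)^{\mathfrak{gl}(V)_{\rm diag}}$ (an algebra, the quantum Hamiltonian reduction). Define in $\mathcal Y_d$ the images of $a_r=\sum_{i_1,\dots,i_r}e_{i_1i_2}e_{i_2i_3}\cdots e_{i_ri_1}$ ($r\ge1$), $a_0=d$, and $b_s=\sum_{i_1,\dots,i_{s+1}}p_{i_1}e_{i_1i_2}\cdots e_{i_si_{s+1}}q_{i_{s+1}}$ ($s\ge0$). *)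

From HB Require Import structures.
From mathcomp Require Import all_boot all_algebra.
From mathcomp Require Import complex reals Rstruct.
Set Implicit Arguments. Unset Strict Implicit. Unset Printing Implicit Defensive.
Import GRing.Theory.
Local Open Scope ring_scope.

Definition CC : fieldType := Rdefinitions.R[i].

Definition lcomm (A : pzRingType) (x y : A) : A := x * y - y * x.

(* [A], [e], [e'], [q], [p] is a representation of the Lie algebra
   a = (gl(V) |x V) (+) (gl(V) |x V^dual), V = C^d, in the associative C-algebra A:
   the images satisfy  x y - y x = [x, y]  for all basis elements x, y of a.
   U(a) is the initial such algebra (universal property). *)
Definition a_rep (d : nat) (A : algType CC)
    (e e' : 'I_d -> 'I_d -> A) (q p : 'I_d -> A) : Prop :=
  [/\ [/\ (forall i j k l, lcomm (e i j) (e k l)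
                       = (j == k)%:R * e i l - (l == i)%:R * e k j),
      (forall i j k l, lcomm (e' i j) (e' k l)
                       = (j == k)%:R * e' i l - (l == i)%:R * e' k j),
      (forall i j k, lcomm (e i j) (q k) = (j == k)%:R * q i) &
      (forall i j k, lcomm (e' i j) (p k) = - ((k == i)%:R * p j))],
      (forall i j k l, lcomm (e i j) (e' k l) = 0),
      (forall i j k, lcomm (e i j) (p k) = 0),
      (forall i j k, lcomm (e' i j) (q k) = 0) &
      [/\ (forall i j, lcomm (q i) (q j) = 0),
          (forall i j, lcomm (p i) (p j) = 0) &
          (forall i j, lcomm (q i) (p j) = 0)]].

Definition in_diag_left_ideal (d : nat) (A : algType CC)
    (e e' : 'I_d -> 'I_d -> A) (x : A) : Prop :=
  exists c : 'I_d -> 'I_d -> A,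
    x = \sum_(i < d) \sum_(j < d) c i j * (e i j + e' i j).

Definition a_el (d : nat) (A : algType CC) (e : 'I_d -> 'I_d -> A) (r : nat) : A :=
  if r is 0 then d%:R
  else \sum_(f : {ffun 'I_r -> 'I_d}) \prod_(k < r) e (f k) (f (ordS k)).

Definition b_el (d : nat) (A : algType CC) (e : 'I_d -> 'I_d -> A)
    (q p : 'I_d -> A) (s : nat) : A :=
  \sum_(f : {ffun 'I_s.+1 -> 'I_d})
     (p (f ord0) * (\prod_(k < s) e (f (inord k)) (f (inord k.+1))) * q (f ord_max)).

From HB Require Import structures.
From mathcomp Require Import all_boot all_algebra.
From mathcomp Require Import complex reals Rstruct.
From mathcomp Require Import zify.
Set Implicit Arguments. Unset Strict Implicit. Unset Printing Implicit Defensive.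
Import GRing.Theory.
Local Open Scope ring_scope.

(* With E = (e_ij) the matrix of generators and q the column (q_i), one has
   a_r = tr E^r and b_s = sum_k p_k (E^s q)_k.  Commutation with e_ab acts on the
   entries of E^n by the adjoint action of gl_d and on E^n q by the natural one, so
   the traces a_r commute with every e_ab, hence with each other, and [a_m, (E^n q)_k]
   is an explicit sum; a telescoping difference of two such sums gives the third
   identity, whose case r = 0 is the second.
   For the fourth, put V(r,s) = [(E^r q)_j, b_s].  The case r = 1 of the third
   identity says that ad a_2 acts on E^s q and on b_s as 2 shift - d; through the
   Jacobi identity this gives a recursion for V which, together with the explicit
   value of V(r,0) + V(0,r), yields V(r,s) + V(s,r) = 0 by induction on r + s
   (dividing by 2).  The fourth identity is the p-weighted sum of this
   antisymmetry.  All four identities hold in A itself, so their defects lie in the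
   left ideal trivially. *)

Section Commutator.
Variable R : pzRingType.
Implicit Types x y z : R.

Lemma lcommC x y : lcomm x y = - lcomm y x.
Proof. by rewrite /lcomm opprB. Qed.

Lemma lcommMl x y z : lcomm (x * y) z = x * lcomm y z + lcomm x z * y.
Proof. by rewrite /lcomm mulrBr mulrBl !mulrA addrA subrK. Qed.

Lemma lcommMr x y z : lcomm x (y * z) = lcomm x y * z + y * lcomm x z.
Proof. by rewrite /lcomm mulrBr mulrBl !mulrA addrA subrK. Qed.

Lemma lcomm_suml I (r : seq I) (P : pred I) (F : I -> R) y :
  lcomm (\sum_(i <- r | P i) F i) y = \sum_(i <- r | P i) lcomm (F i) y.
Proof. by rewrite /lcomm mulr_suml mulr_sumr -sumrB. Qed.

Lemma lcomm_sumr I (r : seq I) (P : pred I) (F : I -> R) y :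
  lcomm y (\sum_(i <- r | P i) F i) = \sum_(i <- r | P i) lcomm y (F i).
Proof. by rewrite /lcomm mulr_suml mulr_sumr -sumrB. Qed.

Lemma lcommDl x y z : lcomm (x + y) z = lcomm x z + lcomm y z.
Proof. by rewrite /lcomm mulrDl mulrDr opprD addrACA. Qed.

Lemma lcommDr x y z : lcomm z (x + y) = lcomm z x + lcomm z y.
Proof. by rewrite /lcomm mulrDl mulrDr opprD addrACA. Qed.

Lemma lcommNl x y : lcomm (- x) y = - lcomm x y.
Proof. by rewrite /lcomm mulNr mulrN opprB opprK addrC. Qed.

Lemma lcommNr x y : lcomm y (- x) = - lcomm y x.
Proof. by rewrite /lcomm mulNr mulrN opprB opprK addrC. Qed.

Lemma lcommBl x y z : lcomm (x - y) z = lcomm x z - lcomm y z.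
Proof. by rewrite lcommDl lcommNl. Qed.

Lemma lcommBr x y z : lcomm z (x - y) = lcomm z x - lcomm z y.
Proof. by rewrite lcommDr lcommNr. Qed.

Lemma lcommMnl x y n : lcomm (x *+ n) y = lcomm x y *+ n.
Proof. by rewrite /lcomm mulrnAl mulrnAr mulrnBl. Qed.

Lemma lcommMnr x y n : lcomm y (x *+ n) = lcomm y x *+ n.
Proof. by rewrite /lcomm mulrnAl mulrnAr mulrnBl. Qed.

Lemma lcommr0 y : lcomm y 0 = 0.
Proof. by rewrite /lcomm mulr0 mul0r subrr. Qed.

Lemma lcomm_natl n y : lcomm n%:R y = 0.
Proof. by rewrite /lcomm (commr_nat y n) subrr. Qed.

Lemma lcomm_natr n y : lcomm y n%:R = 0.
Proof. by rewrite lcommC lcomm_natl oppr0. Qed.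

Lemma lcomm_mulnatl n x y : lcomm (x * n%:R) y = lcomm x y * n%:R.
Proof. by rewrite lcommMl lcomm_natl mulr0 add0r. Qed.

Lemma lcomm_mulnatr n x y : lcomm x (y * n%:R) = lcomm x y * n%:R.
Proof. by rewrite lcommMr lcomm_natr mulr0 addr0. Qed.

Lemma lcomm_eq0 x y : lcomm x y = 0 -> x * y = y * x.
Proof. exact: subr0_eq. Qed.

Lemma lcomm_jacobi x y z :
  lcomm x (lcomm y z) = lcomm (lcomm x y) z + lcomm y (lcomm x z).
Proof.
rewrite lcommBr !lcommMr.
set a := lcomm x y * z; set b := y * lcomm x z; set c := lcomm x z * y.
set f := z * lcomm x y.
rewrite [X in _ = X + _]/lcomm [X in _ = _ + X]/lcomm -/a -/b -/c -/f.
by rewrite opprD (addrC (-c)) addrACA.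
Qed.

End Commutator.

Lemma mulr2n_eq0 (F : fieldType) (V : lmodType F) (x : V) :
  (2%:R : F) != 0 -> x *+ 2 = 0 -> x = 0.
Proof.
move=> two_neq0 x2; rewrite -[x]scale1r -(mulVf two_neq0) -scalerA scaler_nat x2.
exact: scaler0.
Qed.

Section FinfunSums.
Variable T : finType.

Definition ffun_cons n (x : T) (g : {ffun 'I_n -> T}) : {ffun 'I_n.+1 -> T} :=
  [ffun i => if unlift ord0 i is Some j then g j else x].

Lemma ffun_cons0 n x (g : {ffun 'I_n -> T}) : ffun_cons x g ord0 = x.
Proof. by rewrite ffunE unlift_none. Qed.

Lemma ffun_consS n x (g : {ffun 'I_n.+1 -> T}) k :
  (k <= n)%N -> ffun_cons x g (inord k.+1) = g (inord k).
Proof.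
move=> le_kn; have -> : (inord k.+1 : 'I_n.+2) = lift ord0 (inord k).
  by apply/val_inj; rewrite /= /bump /= add1n !inordK.
by rewrite ffunE liftK.
Qed.

Lemma big_ffun_cons (V : nmodType) n (F : {ffun 'I_n.+1 -> T} -> V) :
  \sum_f F f = \sum_(x : T) \sum_(g : {ffun 'I_n -> T}) F (ffun_cons x g).
Proof.
rewrite pair_big /= (reindex (fun u : T * {ffun 'I_n -> T} => ffun_cons u.1 u.2)) //=.
exists (fun f : {ffun 'I_n.+1 -> T} => (f ord0, [ffun j => f (lift ord0 j)])).
  move=> [x g] _ /=; rewrite ffun_cons0; congr pair.
  by apply/ffunP=> j; rewrite !ffunE liftK.
move=> f _; apply/ffunP=> i; rewrite ffunE.
by case: unliftP => [j ->|->]; rewrite ?ffunE.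
Qed.

Lemma big_ffun1 (V : nmodType) (F : {ffun 'I_1 -> T} -> V) :
  \sum_f F f = \sum_(x : T) F [ffun _ => x].
Proof.
rewrite (reindex (fun x : T => [ffun _ : 'I_1 => x])) //=.
exists (fun f : {ffun 'I_1 -> T} => f ord0) => [x _|f _]; first by rewrite ffunE.
by apply/ffunP=> i; rewrite ffunE (ord1 i).
Qed.

End FinfunSums.

Section PathSums.
Variables (R : pzRingType) (d : nat) (e : 'I_d -> 'I_d -> R).

Definition emx : 'M[R]_d := \matrix_(i, j) e i j.

Lemma sum_paths n (u v : 'I_d -> R) :
  \sum_(f : {ffun 'I_n.+1 -> 'I_d})
     (u (f ord0) * (\prod_(k < n) e (f (inord k)) (f (inord k.+1))) * v (f ord_max))
  = \sum_i u i * (emx ^+ n *m \col_j v j) i ord0.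
Proof.
elim: n u => [|n IH] u.
  rewrite big_ffun1; apply: eq_bigr => x _.
  by rewrite big_ord0 mulr1 !ffunE expr0 mul1mx mxE.
rewrite big_ffun_cons; apply: eq_bigr => x _.
rewrite exprS -mulmxE -mulmxA mxE.
rewrite (eq_bigr (fun j => e x j * (emx ^+ n *m \col_j v j) j ord0)) => [|j _]; last first.
  by rewrite mxE.
rewrite -IH mulr_sumr; apply: eq_bigr => g _.
rewrite big_ord_recl ffun_cons0.
have -> : (ord_max : 'I_n.+2) = inord n.+1 by apply/val_inj; rewrite /= inordK.
rewrite ffun_consS // (_ : inord 0 = ord0); last by apply/val_inj; rewrite /= inordK.
rewrite ffun_cons0 (_ : inord ord0 = ord0); last by apply/val_inj; rewrite /= inordK.
rewrite ffun_consS // (_ : ord_max = inord n); last by apply/val_inj; rewrite /= inordK.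
rewrite !mulrA; congr (_ * _ * _ * _).
apply: eq_bigr => i _; rewrite lift0 !ffun_consS //.
exact: ltnW.
Qed.

Lemma sum_paths_cycle n :
  \sum_(f : {ffun 'I_n.+1 -> 'I_d}) \prod_(k < n.+1) e (f k) (f (ordS k))
  = \tr (emx ^+ n.+1).
Proof.
(* Closing the cycle by a Kronecker delta turns it into an open path. *)
transitivity (\sum_(f : {ffun 'I_n.+1 -> 'I_d}) \sum_i
   ((f ord0 == i)%:R * (\prod_(k < n) e (f (inord k)) (f (inord k.+1))) * e (f ord_max) i)).
  apply: eq_bigr => f _.
  rewrite [RHS](bigD1 (f ord0)) //= eqxx mul1r [X in _ + X]big1 ?addr0; last first.
    by move=> i ne; rewrite eq_sym (negbTE ne) !mul0r.
  rewrite big_ord_recr /=; congr (_ * e _ (f _)).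
    apply: eq_bigr => k _; congr (e (f _) (f _)); apply/val_inj.
      by rewrite /= inordK // ltnS ltnW.
    by rewrite /= inordK ?modn_small // ltnS.
  by apply/val_inj; rewrite /= modnn.
rewrite exchange_big /mxtrace; apply: eq_bigr => i _.
rewrite (sum_paths n (fun x => (x == i)%:R) (fun c => e c i)).
rewrite (bigD1 i) //= eqxx mul1r big1 ?addr0 => [|j /negbTE ->]; last by rewrite mul0r.
by rewrite exprSr -mulmxE !mxE; apply: eq_bigr => c _; rewrite !mxE.
Qed.

End PathSums.

Lemma sumr_deltal (R : nmodType) (I : finType) (F : I -> R) i :
  \sum_j F j *+ (j == i) = F i.
Proof.
by rewrite (bigD1 i) //= eqxx mulr1n big1 ?addr0 // => j /negbTE ->; rewrite mulr0n.
Qed.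

Lemma sumr_deltar (R : nmodType) (I : finType) (F : I -> R) i :
  \sum_j F j *+ (i == j) = F i.
Proof. by rewrite -[RHS](sumr_deltal F i); apply: eq_bigr => j _; rewrite eq_sym. Qed.

Section Representation.
Variables (R : pzRingType) (d : nat) (e : 'I_d -> 'I_d -> R) (q p : 'I_d -> R).
Hypothesis lcomm_ee :
  forall i j k l, lcomm (e i j) (e k l) = e i l *+ (j == k) - e k j *+ (l == i).
Hypothesis lcomm_eq : forall i j k, lcomm (e i j) (q k) = q i *+ (j == k).
Hypothesis lcomm_ep : forall i j k, lcomm (e i j) (p k) = 0.
Hypothesis lcomm_qq : forall i j, lcomm (q i) (q j) = 0.
Hypothesis lcomm_qp : forall i j, lcomm (q i) (p j) = 0.
Hypothesis lcomm_pp : forall i j, lcomm (p i) (p j) = 0.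

Local Notation E := (emx e).

Definition qpow n i := (E ^+ n *m \col_j q j) i ord0.
Definition a_mx m := \tr (E ^+ m).
Definition b_mx s := \sum_k p k * qpow s k.

Lemma emx_exprSr n i j : (E ^+ n.+1) i j = \sum_c (E ^+ n) i c * e c j.
Proof. by rewrite exprSr -mulmxE mxE; apply: eq_bigr => c _; rewrite mxE. Qed.

Lemma emx_expr0 i j : (E ^+ 0) i j = (i == j)%:R.
Proof. by rewrite expr0 mxE. Qed.

Lemma qpowS n i : qpow n.+1 i = \sum_c e i c * qpow n c.
Proof. by rewrite /qpow exprS -mulmxE -mulmxA mxE; apply: eq_bigr => c _; rewrite mxE. Qed.

Lemma qpow0 i : qpow 0 i = q i.
Proof. by rewrite /qpow expr0 mul1mx mxE. Qed.

Lemma sum_emx_qpow l n i : \sum_c (E ^+ l) i c * qpow n c = qpow (l + n) i.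
Proof. by rewrite /qpow exprD -mulmxE -mulmxA mxE. Qed.

Lemma a_mx0 : a_mx 0 = d%:R.
Proof.
rewrite /a_mx /mxtrace (eq_bigr (fun _ => 1)) => [|i _]; last by rewrite emx_expr0 eqxx.
by rewrite sumr_const card_ord.
Qed.

Section CommutingWithE.
Variable y : R.
Hypothesis lcomm_ye : forall i j, lcomm y (e i j) = 0.

Lemma lcomm_emx_expr0 n i j : lcomm y ((E ^+ n) i j) = 0.
Proof.
elim: n i j => [|n IH] i j; first by rewrite emx_expr0 lcomm_natr.
rewrite emx_exprSr lcomm_sumr big1 // => c _.
by rewrite lcommMr IH lcomm_ye mul0r mulr0 addr0.
Qed.

Lemma lcomm_a_mx0 m : lcomm y (a_mx m) = 0.
Proof. by rewrite /a_mx /mxtrace lcomm_sumr big1 // => i _; rewrite lcomm_emx_expr0. Qed.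

Lemma lcomm_qpow0 n i : (forall k, lcomm y (q k) = 0) -> lcomm y (qpow n i) = 0.
Proof.
move=> lcomm_yq; elim: n i => [|n IH] i; first by rewrite qpow0 lcomm_yq.
rewrite qpowS lcomm_sumr big1 // => c _.
by rewrite lcommMr IH lcomm_ye mul0r mulr0 addr0.
Qed.

End CommutingWithE.

Lemma lcomm_e_emx_expr a b n i j :
  lcomm (e a b) ((E ^+ n) i j) = (E ^+ n) a j *+ (b == i) - (E ^+ n) i b *+ (j == a).
Proof.
elim: n i j => [|n IH] i j.
  by rewrite !emx_expr0 lcomm_natr -!mulrnA (eq_sym i b) (eq_sym j a) mulnC subrr.
rewrite !emx_exprSr lcomm_sumr.
rewrite (eq_bigr (fun c => ((E ^+ n) a c * e c j) *+ (b == i)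
    - (E ^+ n) i b * e a j *+ (c == a)
    + ((E ^+ n) i b * e a j *+ (b == c) - ((E ^+ n) i c * e c b) *+ (j == a)))).
  by rewrite big_split /= !sumrB sumr_deltal sumr_deltar -!sumrMnl addrA subrK.
move=> c _; rewrite lcommMr IH lcomm_ee mulrBr mulrBl !mulrnAr !mulrnAl.
congr (_ - _ + (_ - _)).
  by case: (c =P a) => [->|] //=; rewrite !mulr0n.
by case: (b =P c) => [->|] //=; rewrite !mulr0n.
Qed.

Lemma lcomm_e_a_mx a b m : lcomm (e a b) (a_mx m) = 0.
Proof.
rewrite /a_mx /mxtrace lcomm_sumr.
under eq_bigr do rewrite lcomm_e_emx_expr.
by rewrite sumrB sumr_deltar sumr_deltal subrr.
Qed.

Lemma lcomm_a_mx r s : lcomm (a_mx r) (a_mx s) = 0.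
Proof.
by rewrite lcommC lcomm_a_mx0 ?oppr0 // => i j; rewrite lcommC lcomm_e_a_mx oppr0.
Qed.

Lemma lcomm_e_qpow a b n i : lcomm (e a b) (qpow n i) = qpow n a *+ (b == i).
Proof.
elim: n i => [|n IH] i; first by rewrite !qpow0 lcomm_eq.
rewrite !qpowS lcomm_sumr -sumrMnl.
rewrite (eq_bigr (fun c => (e a c * qpow n c) *+ (b == i) - e i b * qpow n a *+ (c == a)
    + e i b * qpow n a *+ (b == c))).
  by rewrite big_split /= sumrB sumr_deltal sumr_deltar subrK.
move=> c _; rewrite lcommMr IH lcomm_ee mulrBl !mulrnAr !mulrnAl.
congr (_ - _ + _).
  by case: (c =P a) => [->|] //=; rewrite !mulr0n.
by case: (b =P c) => [->|] //=; rewrite !mulr0n.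
Qed.

Lemma lcomm_pe k i j : lcomm (p k) (e i j) = 0.
Proof. by rewrite lcommC lcomm_ep oppr0. Qed.

Lemma lcomm_p_qpow k n i : lcomm (p k) (qpow n i) = 0.
Proof. by apply: lcomm_qpow0 => [|k']; [exact: lcomm_pe | rewrite lcommC lcomm_qp oppr0]. Qed.

Lemma lcomm_p_a_mx k m : lcomm (p k) (a_mx m) = 0.
Proof. exact/lcomm_a_mx0/lcomm_pe. Qed.

Lemma lcomm_p_b_mx k s : lcomm (p k) (b_mx s) = 0.
Proof.
rewrite /b_mx lcomm_sumr big1 // => c _.
by rewrite lcommMr lcomm_pp lcomm_p_qpow mul0r mulr0 addr0.
Qed.

Lemma lcomm_emx_expr_qpow l n i j k :
  lcomm ((E ^+ l) i j) (qpow n k) = \sum_(0 <= t < l) qpow (n + t) i * (E ^+ (l - t.+1)) k j.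
Proof.
elim: l i j => [|l IH] i j; first by rewrite emx_expr0 lcomm_natl big_geq.
rewrite emx_exprSr lcomm_suml.
rewrite (eq_bigr (fun c => ((E ^+ l) i c * qpow n c) *+ (j == k)
   + \sum_(0 <= t < l) qpow (n + t) i * ((E ^+ (l - t.+1)) k c * e c j))); last first.
  move=> c _; rewrite lcommMl lcomm_e_qpow IH mulrnAr mulr_suml; congr (_ + _).
  by apply: eq_bigr => t _; rewrite mulrA.
rewrite big_split /= sumrMnl sum_emx_qpow exchange_big /=.
rewrite big_nat_recr //= subnn emx_expr0 addrC; congr (_ + _).
  apply: eq_big_nat => t /andP [_ lt_tl].
  by rewrite -mulr_sumr -emx_exprSr subSS subnSK.
by rewrite addnC eq_sym mulr_natr.
Qed.

Lemma sum_qpow_emx_expr u m k :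
  \sum_i qpow m i * (E ^+ u) k i
  = qpow (u + m) k - \sum_(0 <= t < u) qpow (m + t) k * a_mx (u - t.+1).
Proof.
rewrite (eq_bigr (fun i => (E ^+ u) k i * qpow m i - lcomm ((E ^+ u) k i) (qpow m i))).
  rewrite sumrB sum_emx_qpow; congr (_ - _).
  under eq_bigr do rewrite lcomm_emx_expr_qpow.
  by rewrite exchange_big /=; apply: eq_bigr => t _; rewrite /a_mx /mxtrace mulr_sumr.
by move=> i _; rewrite /lcomm opprB addrC subrK.
Qed.

Lemma lcomm_a_mx_qpow m n k :
  lcomm (a_mx m) (qpow n k) = qpow (m.-1 + n) k *+ m
    - \sum_(0 <= t < m) \sum_(0 <= t' < m - t.+1)
        qpow (n + t + t') k * a_mx (m - t.+1 - t'.+1).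
Proof.
rewrite /a_mx /mxtrace lcomm_suml.
under eq_bigr do rewrite lcomm_emx_expr_qpow.
rewrite exchange_big /= (eq_big_nat _ _ (F2 := fun t => qpow (m.-1 + n) k
    - \sum_(0 <= t' < m - t.+1) qpow (n + t + t') k * a_mx (m - t.+1 - t'.+1))).
  by rewrite sumrB sumr_const_nat subn0.
move=> t /andP [_ lt_tm]; rewrite -/(qpow _ _).
by rewrite sum_qpow_emx_expr (_ : (m - t.+1 + (n + t) = m.-1 + n)%N) //; lia.
Qed.

Lemma lcomm_a_mx_qpow_shift r s k :
  lcomm (a_mx r.+1) (qpow s k) - lcomm (a_mx r) (qpow s.+1 k)
  = qpow (r + s) k - \sum_(0 <= t < r) qpow (s + t) k * a_mx (r - t.+1).
Proof.
rewrite !lcomm_a_mx_qpow big_nat_recl //= subn1 addn0.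
under [X in _ - (_ + X) - _]eq_bigr do rewrite subSS -addSnnS.
have -> : qpow (r.-1 + s.+1) k *+ r = qpow (r + s) k *+ r.
  by case: r => [|r]; rewrite ?mulr0n // addnS.
by rewrite mulrS opprD opprB !addrA subrK addrAC addrK.
Qed.

Lemma lcomm_a_mx_b_mx m n : lcomm (a_mx m) (b_mx n) = \sum_k p k * lcomm (a_mx m) (qpow n k).
Proof.
rewrite /b_mx lcomm_sumr; apply: eq_bigr => k _.
by rewrite lcommMr lcommC lcomm_p_a_mx oppr0 mul0r add0r.
Qed.

Lemma lcomm_a_mx_b_mx_shift r s :
  lcomm (a_mx r.+1) (b_mx s) - lcomm (a_mx r) (b_mx s.+1)
  = b_mx (r + s) - \sum_(t < r) b_mx (r + s - t - 1) * a_mx t.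
Proof.
rewrite !lcomm_a_mx_b_mx -sumrB.
under eq_bigr do rewrite -mulrBr lcomm_a_mx_qpow_shift mulrBr mulr_sumr.
rewrite sumrB exchange_big /=; congr (_ - _).
rewrite -(big_mkord xpredT (fun t => b_mx (r + s - t - 1) * a_mx t)) big_nat_rev /=.
apply: eq_big_nat => t /andP [_ lt_tr]; rewrite /b_mx mulr_suml.
have -> : (s + (0 + r - t.+1) = r + s - t - 1)%N by lia.
have -> : (r - (0 + r - t.+1).+1 = t)%N by lia.
by apply: eq_bigr => k _; rewrite mulrA.
Qed.

Lemma lcomm_a_mx1_qpow s k : lcomm (a_mx 1) (qpow s k) = qpow s k.
Proof.
by have := lcomm_a_mx_qpow_shift 0 s k; rewrite big_geq // subr0 a_mx0 lcomm_natl subr0.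
Qed.

Lemma lcomm_a_mx1_b_mx s : lcomm (a_mx 1) (b_mx s) = b_mx s.
Proof.
by have := lcomm_a_mx_b_mx_shift 0 s; rewrite big_ord0 subr0 a_mx0 lcomm_natl subr0.
Qed.

Lemma lcomm_a_mx2_qpow s k : lcomm (a_mx 2) (qpow s k) = qpow s.+1 k *+ 2 - qpow s k * d%:R.
Proof.
have := lcomm_a_mx_qpow_shift 1 s k; rewrite big_nat1 lcomm_a_mx1_qpow addn0 subn1 a_mx0.
by move/(canRL (subrK _)) => ->; rewrite mulr2n addrAC.
Qed.

Lemma lcomm_a_mx2_b_mx s : lcomm (a_mx 2) (b_mx s) = b_mx s.+1 *+ 2 - b_mx s * d%:R.
Proof.
have := lcomm_a_mx_b_mx_shift 1 s; rewrite big_ord1 lcomm_a_mx1_b_mx a_mx0 subn1 subn0.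
by move/(canRL (subrK _)) => ->; rewrite mulr2n addrAC.
Qed.

Definition qbcomm r s j := lcomm (qpow r j) (b_mx s).

Lemma lcomm_e_b_mx j c s : lcomm (e j c) (b_mx s) = p c * qpow s j.
Proof.
rewrite /b_mx lcomm_sumr (eq_bigr (fun k => (p k * qpow s j) *+ (c == k))).
  by rewrite sumr_deltar.
by move=> k _; rewrite lcommMr lcomm_ep mul0r add0r lcomm_e_qpow mulrnAr.
Qed.

Lemma qbcommS r s j : qbcomm r.+1 s j = \sum_c e j c * qbcomm r s c + qpow s j * b_mx r.
Proof.
rewrite /qbcomm qpowS lcomm_suml.
rewrite (eq_bigr (fun c => e j c * lcomm (qpow r c) (b_mx s) + qpow s j * (p c * qpow r c))).
  by rewrite big_split /= -mulr_sumr.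
move=> c _; rewrite lcommMl lcomm_e_b_mx mulrA; congr (_ + _ * _).
by rewrite lcomm_eq0 // lcomm_p_qpow.
Qed.

Lemma lcomm_b_mx r s : lcomm (b_mx r) (b_mx s) = \sum_j p j * qbcomm r s j.
Proof.
rewrite {1}/b_mx lcomm_suml; apply: eq_bigr => j _.
by rewrite lcommMl lcomm_p_b_mx mul0r addr0.
Qed.

Lemma lcomm_qpow_q r j k :
  lcomm (qpow r j) (q k) = \sum_(0 <= t < r) qpow t j * qpow (r - t.+1) k.
Proof.
elim: r j => [|r IH] j; first by rewrite qpow0 lcomm_qq big_geq.
rewrite qpowS lcomm_suml.
rewrite (eq_bigr (fun c => \sum_(0 <= t < r) e j c * qpow t c * qpow (r - t.+1) k
   + (q j * qpow r c) *+ (c == k))); last first.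
  move=> c _; rewrite lcommMl IH lcomm_eq mulrnAl mulr_sumr; congr (_ + _).
  by apply: eq_bigr => t _; rewrite mulrA.
rewrite big_split /= sumr_deltal exchange_big big_nat_recl //= qpow0 subn1 /= addrC.
by congr (_ + _); apply: eq_bigr => t _; rewrite -mulr_suml qpowS subSS.
Qed.

Lemma qbcomm_r0 r j : qbcomm r 0 j = \sum_(0 <= t < r) qpow t j * b_mx (r - t.+1).
Proof.
rewrite /qbcomm {1}/b_mx lcomm_sumr.
rewrite (eq_bigr (fun k => \sum_(0 <= t < r) qpow t j * (p k * qpow (r - t.+1) k))).
  by rewrite exchange_big /=; apply: eq_bigr => t _; rewrite -mulr_sumr.
move=> k _; rewrite lcommMr (lcommC _ (p k)) lcomm_p_qpow oppr0 mul0r add0r.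
rewrite qpow0 lcomm_qpow_q mulr_sumr; apply: eq_bigr => t _.
by rewrite mulrA (lcomm_eq0 (lcomm_p_qpow k t j)) -mulrA.
Qed.

Lemma qbcomm_0r r j : qbcomm 0 r j = - \sum_(0 <= t < r) b_mx t * qpow (r - t.+1) j.
Proof.
rewrite /qbcomm qpow0 /b_mx lcomm_sumr.
rewrite (eq_bigr (fun k => - \sum_(0 <= t < r) p k * qpow t k * qpow (r - t.+1) j)).
  by rewrite sumrN exchange_big /=; congr (- _); apply: eq_bigr => t _; rewrite -mulr_suml.
move=> k _; rewrite lcommMr lcomm_qp mul0r add0r lcommC lcomm_qpow_q mulrN mulr_sumr.
by congr (- _); apply: eq_bigr => t _; rewrite mulrA.
Qed.

Lemma qbcomm_r0_0r r j :
  qbcomm r 0 j + qbcomm 0 r j = \sum_(0 <= t < r) qbcomm (r - t.+1) t j.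
Proof.
rewrite qbcomm_r0 qbcomm_0r big_nat_rev /= -sumrB.
apply: eq_big_nat => t /andP [_ lt_tr].
by rewrite add0n (_ : (r - (r - t.+1).+1)%N = t) //; lia.
Qed.

Lemma lcomm_a_mx2_qbcomm r s j :
  lcomm (a_mx 2) (qbcomm r s j)
  = (qbcomm r.+1 s j + qbcomm r s.+1 j - qbcomm r s j * d%:R) *+ 2.
Proof.
rewrite /qbcomm lcomm_jacobi lcomm_a_mx2_qpow lcomm_a_mx2_b_mx.
rewrite lcommBl lcommBr lcommMnl lcommMnr lcomm_mulnatl lcomm_mulnatr.
by rewrite addrACA -mulrnDl -opprD -mulr2n mulrnBl.
Qed.

Hypothesis no_2torsion : forall x : R, x *+ 2 = 0 -> x = 0.

Lemma qbcomm_antisym_step r s :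
  (forall j, qbcomm r s j + qbcomm s r j = 0) ->
  forall j, (qbcomm r s.+1 j + qbcomm s.+1 r j) + (qbcomm r.+1 s j + qbcomm s r.+1 j) = 0.
Proof.
move=> antisym_rs j; apply: no_2torsion.
have := congr1 (lcomm (a_mx 2)) (antisym_rs j).
rewrite lcommDr !lcomm_a_mx2_qbcomm lcommr0 -mulrnDl addrACA -opprD -mulrDl antisym_rs mul0r.
by rewrite subr0 (addrC (qbcomm r.+1 s j)) addrACA.
Qed.

Lemma qbcomm_antisym r s j : qbcomm r s j + qbcomm s r j = 0.
Proof.
move: {2}(r + s)%N (erefl (r + s)%N) j => N; elim: N r s => [|N IHN] r s.
  by case: r s => [|r] [|s] // _ j; rewrite qbcomm_0r big_geq // oppr0 addr0.
elim: r s => [|r IHr] s rs_N j.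
  rewrite add0n in rs_N; rewrite rs_N addrC qbcomm_r0_0r; apply: no_2torsion.
  (* Pairing the terms t and N - t of the antidiagonal sum reduces to r + s = N. *)
  rewrite mulr2n [X in _ + X]big_nat_rev -big_split /= big1_seq // => t.
  rewrite mem_index_iota => /andP [_ /andP [_ lt_tN]].
  by rewrite add0n (_ : (N.+1 - (N.+1 - t.+1).+1 = t)%N) ?IHN //; lia.
have rs_N' : (r + s = N)%N by lia.
have := qbcomm_antisym_step (IHN r s rs_N') j.
by rewrite (IHr s.+1) ?add0r //; lia.
Qed.

Lemma lcomm_b_mx_shift r s :
  lcomm (b_mx r.+1) (b_mx s) - lcomm (b_mx r) (b_mx s.+1) = b_mx r * b_mx s + b_mx s * b_mx r.
Proof.
have lcomm_b_mxS m n : lcomm (b_mx m.+1) (b_mx n)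
    = \sum_j p j * \sum_c e j c * qbcomm m n c + b_mx n * b_mx m.
  rewrite lcomm_b_mx; under eq_bigr do rewrite qbcommS mulrDr.
  rewrite big_split /= {3}/b_mx mulr_suml; congr (_ + _).
  by apply: eq_bigr => j _; rewrite mulrA.
rewrite (lcommC (b_mx r)) opprK !lcomm_b_mxS addrACA -big_split big1 ?add0r 1?addrC //.
move=> j _ /=; rewrite -mulrDr -big_split big1 ?mulr0 // => c _ /=.
by rewrite -mulrDr qbcomm_antisym mulr0.
Qed.

End Representation.

Section ComplexAlgebra.
Variables (d : nat) (A : algType CC).
Implicit Types (e : 'I_d -> 'I_d -> A) (q p : 'I_d -> A).

Lemma a_elE e m : a_el e m = a_mx e m.
Proof. by case: m => [|m]; [rewrite a_mx0 | rewrite /a_el sum_paths_cycle]. Qed.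

Lemma b_elE e q p s : b_el e q p s = b_mx e q p s.
Proof. exact: sum_paths. Qed.

Lemma in_diag_left_ideal0 e (e' : 'I_d -> 'I_d -> A) : in_diag_left_ideal e e' 0.
Proof.
exists (fun _ _ => 0); symmetry.
by rewrite big1 // => i _; rewrite big1 // => j _; rewrite mul0r.
Qed.

Lemma mulr2n_eq0_CC (x : A) : x *+ 2 = 0 -> x = 0.
Proof. by apply: mulr2n_eq0; rewrite (Num.Theory.pnatr_eq0 Rdefinitions.R[i] 2). Qed.

End ComplexAlgebra.

Theorem proposition3p17 (d : nat) (A : algType CC)
    (e e' : 'I_d -> 'I_d -> A) (q p : 'I_d -> A) :
  a_rep e e' q p ->
  let a := a_el e in
  let b := b_el e q p in
  forall r s : nat,
  [/\ in_diag_left_ideal e e' (lcomm (a r) (a s)),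
      in_diag_left_ideal e e' (lcomm (a 1%N) (b s) - b s),
      in_diag_left_ideal e e'
        (lcomm (a r.+1) (b s) - lcomm (a r) (b s.+1)
         - (b (r + s)%N - \sum_(t < r) b (r + s - t - 1)%N * a t)) &
      in_diag_left_ideal e e'
        (lcomm (b r.+1) (b s) - lcomm (b r) (b s.+1) - (b r * b s + b s * b r))].
Proof.
move=> [[lcomm_ee _ lcomm_eq _] _ lcomm_ep _ [lcomm_qq lcomm_pp lcomm_qp]] a b r s.
have {}lcomm_ee i j k l : lcomm (e i j) (e k l) = e i l *+ (j == k) - e k j *+ (l == i).
  by rewrite lcomm_ee !mulr_natl.
have {}lcomm_eq i j k : lcomm (e i j) (q k) = q i *+ (j == k).
  by rewrite lcomm_eq mulr_natl.
rewrite /a /b; under eq_bigr do rewrite a_elE b_elE.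
rewrite !a_elE !b_elE (lcomm_a_mx lcomm_ee) (lcomm_a_mx1_b_mx lcomm_ee lcomm_eq lcomm_ep).
rewrite (lcomm_a_mx_b_mx_shift lcomm_ee lcomm_eq lcomm_ep).
rewrite (lcomm_b_mx_shift lcomm_ee lcomm_eq lcomm_ep lcomm_qq lcomm_qp lcomm_pp
           (@mulr2n_eq0_CC A)).
by rewrite !subrr; split; apply: in_diag_left_ideal0.
Qed.
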